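(* Let $k\ge 3$, $1\le s\le k-1$, $m\ge 1$, $n=m(k-s)\ge 2k-s$, and let $G$ be the $k$-uniform $s$-cycle with vertex set $\mathbb{Z}_n$ and edges $e_j=\{1+j(k-s),\ldots,s+(j+1)(k-s)\}$ (labels modulo $n$), $j=0,\ldots,m-1$. Then $G$ is regular if and only if $k=q(k-s)$ for some positive integer $q$. In this case every vertex of $G$ has degree $q$.
   Context: A $k$-uniform $s$-cycle with $m$ edges has vertex set $\mathbb{Z}_n$, $n=m(k-s)$ (vertex $n+i$ identified with $i$), and edge set $\{e_0,\ldots,e_{m-1}\}$ with $e_j=\{j(k-s)+1,\ldots,j(k-s)+k\}$; throughout the paper it is assumed that $n\ge 2k-s$. The degree of a vertex is the number of edges containing it; the hypergraph is regular if all degrees are equal. *)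

From mathcomp Require Import all_boot.
Set Implicit Arguments. Unset Strict Implicit. Unset Printing Implicit Defensive.

(* The k-uniform s-cycle with m edges: vertex set Z_n, n = m(k-s), represented
   by 'I_n (residues 0..n-1, label n+i identified with i).
   Edge e_j = { j(k-s)+1, ..., j(k-s)+k } (mod n), j = 0..m-1. *)
Definition scycle_n (k s m : nat) : nat := m * (k - s).

Definition scycle_edge (k s m : nat) (j : nat) : {set 'I_(scycle_n k s m)} :=
  [set v : 'I_(scycle_n k s m) |
     [exists t : 'I_k, (v : nat) == (j * (k - s) + t.+1) %% scycle_n k s m]].

Definition scycle_deg (k s m : nat) (v : 'I_(scycle_n k s m)) : nat :=
  #|[set j : 'I_m | v \in scycle_edge k s m j]|.

Definition scycle_regular (k s m : nat) : Prop :=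
  forall u v : 'I_(scycle_n k s m), scycle_deg u = scycle_deg v.

From mathcomp Require Import all_boot zify.

Set Implicit Arguments.
Unset Strict Implicit.
Unset Printing Implicit Defensive.

(* Write d = k - s and cut Z_n into m blocks of d consecutive vertices, so
   that the vertex a d + b + 1 (a < m, b < d) is the (b+1)-th vertex of block a.
   The edge e_j starts at block j, so this vertex sits at position
   ((a - j) mod m) d + b of e_j, and it lies in e_j iff that position is < k.
   As j runs over Z_m, (a - j) mod m runs over Z_m as well, hence the degree
   of the vertex is #{i < m | i d + b < k}, independent of a.  If d divides k
   this is k/d for every b; otherwise b = 0 and b = d - 1 give different
   counts, the index i = k div d separating them. *)

Definition block_shift (m a j : nat) : nat := if j <= a then a - j else a + m - j.

Lemma block_shift_lt m a j : a < m -> block_shift m a j < m.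
Proof. by rewrite /block_shift; case: (leqP j a) => ? ?; lia. Qed.

Lemma block_shift_inj m a j j' :
  j < m -> j' < m -> block_shift m a j = block_shift m a j' -> j = j'.
Proof. by rewrite /block_shift; case: (leqP j a) => ?; case: (leqP j' a) => ? ? ? ?; lia. Qed.

Lemma block_shift_modn m d a j : a < m -> j < m ->
  j * d + block_shift m a j * d = a * d %[mod m * d].
Proof.
rewrite /block_shift -mulnDl; case: (leqP j a) => [le_ja | lt_aj] _ lt_jm.
  by rewrite subnKC.
by rewrite subnKC 1?mulnDl ?modnDr //; lia.
Qed.

Lemma card_ord_lt m q : q <= m -> #|[set i : 'I_m | i < q]| = q.
Proof.
move=> le_qm; have widen_inj : injective (widen_ord le_qm).
  by move=> x y /(congr1 val) eq_xy; apply: val_inj.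
rewrite -[RHS]card_ord -(card_imset _ widen_inj).
apply: eq_card => i; rewrite inE; apply/idP/imsetP => [lt_iq | [j _ ->]]; last exact: (ltn_ord j).
by exists (Ordinal lt_iq) => //; apply: val_inj.
Qed.

Lemma ord_mul_lt_dvd m d k q b : b < d -> k = q * d ->
  [set i : 'I_m | i * d + b < k] = [set i : 'I_m | i < q].
Proof.
move=> lt_bd ->; apply/setP => i; rewrite !inE.
apply/idP/idP => [|lt_iq]; last first.
  have : i.+1 * d <= q * d by rewrite leq_mul2r lt_iq orbT.
  by rewrite mulSn; lia.
apply: contraLR; rewrite -!leqNgt => le_qi.
have : q * d <= i * d by rewrite leq_mul2r le_qi orbT.
lia.
Qed.

Lemma ord_mul_lt_ndvd m d k : 0 < d -> k %/ d < m -> ~~ (d %| k) ->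
  [set i : 'I_m | i * d + d.-1 < k] \proper [set i : 'I_m | i * d + 0 < k].
Proof.
move=> d_gt0 lt_km ndvd_dk; have k_eq := divn_eq k d.
have r_gt0 : 0 < k %% d by rewrite lt0n -/(dvdn d k).
have r_lt : k %% d < d by rewrite ltn_mod.
apply/properP; split; first by apply/subsetP => i; rewrite !inE; lia.
by exists (Ordinal lt_km); rewrite !inE /=; lia.
Qed.

Section SCycle.

Variables k s m : nat.
Local Notation d := (k - s).
Local Notation n := (scycle_n k s m).

Hypothesis d_gt0 : 0 < d.
Hypothesis k_le_n : k <= n.

Lemma scycle_vertex_block (v : 'I_n) :
  exists a b, [/\ a < m, b < d & v = (a * d + b + 1) %% n :> nat].
Proof.
case: v => v lt_vn /=; rewrite /scycle_n in lt_vn *.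
have [v0 | v_gt0] := posnP v.
  exists m.-1, d.-1; split; [lia | lia |].
  suff -> : m.-1 * d + d.-1 + 1 = m * d by rewrite modnn v0.
  by case: m lt_vn => [|m'] /=; rewrite ?mul0n // mulSn; lia.
exists (v.-1 %/ d), (v.-1 %% d); split; last by rewrite -divn_eq addn1 prednK ?modn_small.
  by rewrite ltn_divLR //; lia.
exact: ltn_pmod.
Qed.

Lemma mem_scycle_edge a b (j : 'I_m) (v : 'I_n) :
  a < m -> b < d -> v = (a * d + b + 1) %% n :> nat ->
  (v \in scycle_edge k s m j) = (block_shift m a j * d + b < k).
Proof.
move=> lt_am lt_bd v_eq; set o := block_shift m a j * d + b.
have lt_on : o < n.
  have := @block_shift_lt m a j lt_am; rewrite /o /scycle_n => lt_shift.
  have : (block_shift m a j).+1 * d <= m * d by rewrite leq_mul2r lt_shift orbT.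
  by rewrite mulSn; lia.
have {}v_eq : v = (o + (j * d).+1) %% n :> nat.
  have -> : o + (j * d).+1 = j * d + block_shift m a j * d + (b + 1) by rewrite /o; lia.
  rewrite v_eq -addnA -modnDml -[RHS]modnDml.
  by rewrite (@block_shift_modn m d a j lt_am (ltn_ord j)).
rewrite inE; apply/existsP/idP => [[t /eqP] | lt_ok].
  have -> : j * d + t.+1 = t + (j * d).+1 by lia.
  move/eqP; rewrite v_eq eqn_modDr !modn_small //; last exact: leq_trans (ltn_ord t) _.
  by move/eqP->.
by exists (Ordinal lt_ok); rewrite v_eq /=; apply/eqP; congr (_ %% _); lia.
Qed.

Lemma scycle_deg_block a b (v : 'I_n) :
  a < m -> b < d -> v = (a * d + b + 1) %% n :> nat ->
  scycle_deg v = #|[set i : 'I_m | i * d + b < k]|.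
Proof.
move=> lt_am lt_bd v_eq.
pose shift (j : 'I_m) := Ordinal (@block_shift_lt m a j lt_am).
have shift_inj : injective shift.
  by move=> j j' /(congr1 val) /block_shift_inj eq_jj'; apply/val_inj/eq_jj'.
rewrite /scycle_deg -[RHS](card_preimset _ shift_inj).
by apply: eq_card => j; rewrite [LHS]in_set (mem_scycle_edge _ lt_am lt_bd v_eq) !inE.
Qed.

Lemma scycle_deg_dvd q (v : 'I_n) : k = q * d -> scycle_deg v = q.
Proof.
move=> k_eq; have [a [b [lt_am lt_bd v_eq]]] := scycle_vertex_block v.
rewrite (scycle_deg_block lt_am lt_bd v_eq) (ord_mul_lt_dvd _ lt_bd k_eq) card_ord_lt //.
by rewrite -(leq_pmul2r d_gt0) -k_eq.
Qed.

Lemma scycle_regular_dvd : k %/ d < m -> scycle_regular k s m -> d %| k.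
Proof.
move=> lt_km reg; apply: contraT => ndvd_dk.
have lt_kn : k < n.
  have k_eq := divn_eq k d; have r_lt : k %% d < d by rewrite ltn_mod.
  have : (k %/ d).+1 * d <= m * d by rewrite leq_mul2r lt_km orbT.
  by rewrite /scycle_n mulSn; lia.
have lt_1n : 1 < n by lia.
have lt_dn : d < n by lia.
have lt_pred : d.-1 < d by lia.
have vd : d = (0 * d + d.-1 + 1) %% n by rewrite addn1 prednK // modn_small.
have m_gt0 : 0 < m := leq_ltn_trans (leq0n _) lt_km.
have deg1 := scycle_deg_block (v := Ordinal lt_1n) m_gt0 d_gt0 (esym (modn_small lt_1n)).
have degd := scycle_deg_block (v := Ordinal lt_dn) m_gt0 lt_pred vd.
have := proper_card (ord_mul_lt_ndvd d_gt0 lt_km ndvd_dk).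
by rewrite -deg1 -degd (reg (Ordinal lt_dn) (Ordinal lt_1n)) ltnn.
Qed.

End SCycle.

Theorem proposition3p1 (k s m : nat) :
  3 <= k -> 1 <= s -> s <= k - 1 -> 1 <= m ->
  2 * k - s <= scycle_n k s m ->
  (scycle_regular k s m <-> exists q : nat, 0 < q /\ k = q * (k - s)) /\
  (forall q : nat, 0 < q -> k = q * (k - s) ->
     forall v : 'I_(scycle_n k s m), scycle_deg v = q).
Proof.
move=> k_ge3 _ s_lt_k _; rewrite /scycle_n => n_ge.
have d_gt0 : 0 < k - s by lia.
have k_le_n : k <= scycle_n k s m by rewrite /scycle_n; lia.
have lt_km : k %/ (k - s) < m by rewrite ltn_divLR //; lia.
have deg_q q v := @scycle_deg_dvd k s m d_gt0 k_le_n q v.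
split=> [|q _ k_eq v]; last exact: deg_q.
split=> [reg | [q [_ k_eq]] u v]; last by rewrite !(deg_q q).
exists (k %/ (k - s)); rewrite divnK ?(scycle_regular_dvd d_gt0 k_le_n) //.
by rewrite divn_gt0 ?leq_subr.
Qed.
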